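(* Let $L$ be a semilattice. Let $X_L=\{P\in\mathrm{Ind}(L)\mid \bigcap_{T\in\mathrm{Ind}(L),\,T\supsetneq P}T\supsetneq P\}$, and for $l\in L$ let $\mathrm{Supp}(l)=\{P\in X_L\mid l\notin P\}$, where $X_L$ carries the coarsest topology in which all $\mathrm{Supp}(l)$ are closed. Then $X_L$ with this map $\mathrm{Supp}$ is the universal support datum of $L$: for every support datum $Y$ of $L$ there exists a unique map of support data $X_L\to Y$.
   Context: A semilattice is a partially ordered set in which any two elements have a supremum; a map of semilattices preserves finite suprema. For a semilattice $L$, an ind-object is a non-empty subset $T\subset L$ closed under suprema of two elements and downward closed; $\mathrm{Ind}(L)$ is the set of ind-objects ordered by inclusion. Any semilattice map $f\colon L\to L'$ into a semilattice $L'$ in which every non-empty subset has a supremum extends uniquely to $\tilde f\colon \mathrm{Ind}(L)\to L'$ preserving arbitrary suprema. For a set $X$, $2^X$ is ordered by inclusion. A support datum of $L$ is a $T_0$ topological space $X$ with a semilattice map $\mathrm{Supp}\colon L\to 2^X$ such that (1) the induced map $\mathrm{Ind}(L)\to 2^X$ is injective, and (2) the topology of $X$ is the coarsest in which all $\mathrm{Supp}(l)$, $l\in L$, are closed. A map of support data $X\to Y$ is a continuous map $f$ with $\mathrm{Supp}_X(l)=f^{-1}(\mathrm{Supp}_Y(l))$ for all $l\in L$. *)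

From HB Require Import structures.
From mathcomp Require Import all_boot all_order.
Set Implicit Arguments. Unset Strict Implicit. Unset Printing Implicit Defensive.
Import Order.LTheory.
Local Open Scope order_scope.

Section SemilatticeSupport.
Context {disp : Order.disp_t} {L : joinSemilatticeType disp}.

Definition is_ind (T : L -> Prop) : Prop :=
  (exists l, T l) /\
  (forall l m, T l -> T m -> T (l `|` m)) /\
  (forall l m, (m <= l) -> T l -> T m).

Definition ind_above_inter (P : L -> Prop) : L -> Prop :=
  fun l => forall T, is_ind T ->
    ((forall x, P x -> T x) /\ (exists x, T x /\ ~ P x)) -> T l.

Definition in_XL (P : L -> Prop) : Prop :=
  is_ind P /\
  (forall x, P x -> ind_above_inter P x) /\
  (exists x, ind_above_inter P x /\ ~ P x).

Definition XL : Type := {P : L -> Prop | in_XL P}.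

Definition SuppXL (l : L) : XL -> Prop := fun P => ~ proj1_sig P l.

Inductive gen_open {X : Type} (B : (X -> Prop) -> Prop) : (X -> Prop) -> Prop :=
  | gen_open_base U : B U -> gen_open B U
  | gen_open_full : gen_open B (fun _ => True)
  | gen_open_inter U V : gen_open B U -> gen_open B V ->
      gen_open B (fun x => U x /\ V x)
  | gen_open_union (F : (X -> Prop) -> Prop) :
      (forall U, F U -> gen_open B U) ->
      gen_open B (fun x => exists U, F U /\ U x).

(* Complements of the supports: the generated topology is the coarsest
   in which all Supp(l) are closed. *)
Definition supp_compl {X : Type} (S : L -> X -> Prop) : (X -> Prop) -> Prop :=
  fun U => exists l, U = (fun x => ~ S l x).

Definition opensXL : (XL -> Prop) -> Prop := gen_open (supp_compl SuppXL).

(* The induced map Ind(L) -> 2^X (unique sup-preserving extension). *)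
Definition ind_ext {X : Type} (S : L -> X -> Prop) (T : L -> Prop) : X -> Prop :=
  fun x => exists l, T l /\ S l x.

Definition is_T0 {X : Type} (opens : (X -> Prop) -> Prop) : Prop :=
  forall x y : X, x <> y ->
    exists U, opens U /\ ((U x /\ ~ U y) \/ (U y /\ ~ U x)).

Definition is_support_datum (X : Type) (opens : (X -> Prop) -> Prop)
    (S : L -> X -> Prop) : Prop :=
  is_T0 opens /\
  (forall l m, S (l `|` m) = (fun x => S l x \/ S m x)) /\
  (forall T1 T2, is_ind T1 -> is_ind T2 -> ind_ext S T1 = ind_ext S T2 -> T1 = T2) /\
  (forall U, opens U <-> gen_open (supp_compl S) U).

Definition is_continuous {X Y : Type} (opX : (X -> Prop) -> Prop)
    (opY : (Y -> Prop) -> Prop) (f : X -> Y) : Prop :=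
  forall V, opY V -> opX (fun x => V (f x)).

Definition is_support_map {X Y : Type} (opX : (X -> Prop) -> Prop)
    (SX : L -> X -> Prop) (opY : (Y -> Prop) -> Prop) (SY : L -> Y -> Prop)
    (f : X -> Y) : Prop :=
  is_continuous opX opY f /\ (forall l, SX l = (fun x => SY l (f x))).

End SemilatticeSupport.

(* Maximal ind-objects avoiding a given element lie in X_L (Zorn), and they
   separate ind-objects; this makes Ind(L) -> 2^(X_L) injective.  Conversely,
   let Y be a support datum and P in X_L with least strict ind-extension Q.
   Injectivity of Ind(L) -> 2^Y yields a point y supported by Q but not by P.
   The elements l whose support misses y form an ind-object containing P but
   not Q, hence equal to P, so y has exactly the supports prescribed by P.
   Such a point is unique because Y is T0 and its topology is generated by
   the supports; uniqueness of the map of support data follows likewise. *)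
From mathcomp Require Import all_boot all_order.
From mathcomp Require Import boolp classical_sets.

Set Implicit Arguments.
Unset Strict Implicit.
Unset Printing Implicit Defensive.
Import Order.LTheory.
Local Open Scope classical_set_scope.
Local Open Scope order_scope.

Lemma gen_open_preimage {X Y : Type} (BX : set (set X)) (BY : set (set Y))
    (f : X -> Y) :
  (forall V, BY V -> gen_open BX (fun x => V (f x))) ->
  forall V, gen_open BY V -> gen_open BX (fun x => V (f x)).
Proof.
move=> fB W; elim=> [| | U V _ oU _ oV | F _ oF].
- exact: fB.
- exact: gen_open_full.
- exact: gen_open_inter oU oV.
- pose G := [set fun x => U (f x) | U in F].
  have -> : (fun x => exists U, F U /\ U (f x)) = (fun x => exists W, G W /\ W x).
    apply/funext => x; apply/propext; split=> [[U [FU Ufx]] | [_ [[U FU <-] Ufx]]].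
    + by exists (fun x => U (f x)); split=> //; exists U.
    + by exists U.
  by apply: gen_open_union => _ [U FU <-]; exact: oF.
Qed.

Lemma gen_open_indistinguishable {X : Type} (B : set (set X)) (x y : X) :
  (forall U, B U -> U x <-> U y) -> forall U, gen_open B U -> U x <-> U y.
Proof.
move=> Bxy U; elim=> [| | | F _ IF]; [exact: Bxy | tauto | tauto |].
by split=> -[V [FV HV]]; exists V; split=> //; apply/(IF V FV).
Qed.

Section Semilattice.
Context {disp : Order.disp_t} {L : joinSemilatticeType disp}.

Lemma ind_joinE (T : set L) l m : is_ind T -> T (l `|` m) <-> T l /\ T m.
Proof.
case=> _ [Tjoin Tdown]; split=> [Tlm | [Tl Tm]]; last exact: Tjoin.
by split; apply: Tdown Tlm; [exact: leUl | exact: leUr].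
Qed.

Lemma is_ind_bigcup_chain (F : set (set L)) :
  (forall A, F A -> A !=set0 -> is_ind A) -> total_on F subset ->
  \bigcup_(A in F) A !=set0 -> is_ind (\bigcup_(A in F) A).
Proof.
move=> Find Ftot Fn0; split=> //; split=> [a b [A FA Aa] [B FB Bb] | a b ba [A FA Aa]].
- have [AB | BA] := Ftot A B FA FB.
  + have [_ [Bjoin _]] := Find B FB (ex_intro _ b Bb).
    by exists B => //; apply: Bjoin => //; exact: AB.
  + have [_ [Ajoin _]] := Find A FA (ex_intro _ a Aa).
    by exists A => //; apply: Ajoin => //; exact: BA.
- have [_ [_ Adown]] := Find A FA (ex_intro _ a Aa).
  by exists A => //; exact: Adown Aa.
Qed.

Lemma ind_maximal_avoiding (T : set L) l : is_ind T -> ~ T l ->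
  exists P, [/\ is_ind P, T `<=` P, ~ P l &
    forall Q, is_ind Q -> P `<=` Q -> ~ Q l -> Q `<=` P].
Proof.
move=> Tind Tl.
(* The empty set is admitted because [Zorn_bigcup] also asks for the union of
   the empty chain. *)
pose good := [set A : set L | A !=set0 -> [/\ is_ind A, T `<=` A & ~ A l]].
have [A [goodA Amax]] : exists A, good A /\ forall B, A `<` B -> ~ good B.
  apply: Zorn_bigcup => F Fgood Ftot Fn0.
  have Find B : F B -> B !=set0 -> is_ind B by move=> FB /(Fgood B FB) [].
  have [x [A FA Ax]] := Fn0.
  split; first exact: is_ind_bigcup_chain.
  - have [_ TA _] := Fgood A FA (ex_intro _ x Ax).
    by move=> t Tt; exists A => //; exact: TA.
  - by case=> B FB Bl; have [_ _] := Fgood B FB (ex_intro _ l Bl); apply.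
have [An0 | A0] := pselect (A !=set0); last first.
  have [t Tt] := proj1 Tind.
  have AT : A `<` T.
    by split=> [a Aa | /(_ t Tt) At]; exfalso; apply: A0; [exists a | exists t].
  by exfalso; apply: (Amax T AT) => _; split.
have [Aind TA Al] := goodA An0.
exists A; split=> // Q Qind AQ Ql; apply: contrapT => QA.
by apply: (Amax Q) => // _; split=> //; exact: subset_trans AQ.
Qed.

Lemma ind_above_inter_sup (P : set L) : P `<=` ind_above_inter P.
Proof. by move=> x Px T _ [PT _]; exact: PT. Qed.

Lemma is_ind_above_inter (P : set L) : is_ind P -> is_ind (ind_above_inter P).
Proof.
case=> [[x Px] _]; split; first by exists x; exact: ind_above_inter_sup.
split=> [a b Qa Qb T Tind PT | a b ba Qa T Tind PT].
- by apply/(ind_joinE _ _ Tind); split; [exact: Qa | exact: Qb].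
- by have [_ [_ Tdown]] := Tind; exact: Tdown ba (Qa T Tind PT).
Qed.

Lemma in_XL_maximal (P : set L) l : is_ind P -> ~ P l ->
  (forall Q, is_ind Q -> P `<=` Q -> ~ Q l -> Q `<=` P) -> in_XL P.
Proof.
move=> Pind Pl Pmax; split=> //; split; first exact: ind_above_inter_sup.
exists l; split=> // T Tind [PT [x [Tx Px]]].
by apply: contrapT => Tl; apply/Px/(Pmax T).
Qed.

Lemma XL_separates (T : set L) l : is_ind T -> ~ T l ->
  exists P : XL, T `<=` sval P /\ ~ sval P l.
Proof.
move=> Tind Tl; have [P [Pind TP Pl Pmax]] := ind_maximal_avoiding Tind Tl.
by exists (exist _ P (in_XL_maximal Pind Pl Pmax)).
Qed.

Lemma XL_ext (P Q : @XL disp L) : (forall l, sval P l <-> sval Q l) -> P = Q.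
Proof. by case: P Q => [P HP] [Q HQ] /= /predeqP PQ; exact: eq_exist. Qed.

Lemma XL_T0 : is_T0 (@opensXL disp L).
Proof.
move=> P Q PQ.
have [l PQl] : exists l, ~ (sval P l <-> sval Q l).
  by apply/existsNP => PQE; apply/PQ/XL_ext.
exists (fun R => ~ SuppXL l R); split; first by apply: gen_open_base; exists l.
rewrite /SuppXL; have [Pl | Pl] := pselect (sval P l); tauto.
Qed.

Lemma SuppXL_join l m :
  SuppXL (l `|` m) = (fun P : @XL disp L => SuppXL l P \/ SuppXL m P).
Proof.
apply/funext => P; have [Pind _] := proj2_sig P; apply/propext; rewrite /SuppXL.
by rewrite -not_andP; split=> PJ PE; apply: PJ; apply/(ind_joinE _ _ Pind).
Qed.

Lemma ind_ext_SuppXL_inj (T1 T2 : set L) : is_ind T1 -> is_ind T2 ->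
  ind_ext SuppXL T1 = ind_ext SuppXL T2 -> T1 = T2.
Proof.
suff sub (A B : set L) : is_ind B ->
    ind_ext SuppXL A = ind_ext SuppXL B -> A `<=` B.
  by move=> I1 I2 E; apply/seteqP; split; [exact: sub | exact: sub (esym E)].
move=> Bind E x Ax; apply: contrapT => Bx.
have [P [BP Px]] := XL_separates Bind Bx.
have : ind_ext SuppXL A P by exists x.
by rewrite E => -[k [Bk]]; apply; exact: BP.
Qed.

Lemma XL_support_datum : is_support_datum (@opensXL disp L) (@SuppXL disp L).
Proof.
split; first exact: XL_T0.
split; first exact: SuppXL_join.
by split; first exact: ind_ext_SuppXL_inj.
Qed.

Lemma is_support_map_of_supp {X Y : Type} (opX : set (set X)) (SX : L -> set X)
    (opY : set (set Y)) (SY : L -> set Y) (f : X -> Y) :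
  (forall U, opX U <-> gen_open (supp_compl SX) U) ->
  (forall V, opY V <-> gen_open (supp_compl SY) V) ->
  (forall l, SX l = (fun x => SY l (f x))) -> is_support_map opX SX opY SY f.
Proof.
move=> opXE opYE fS; split=> // V /opYE oV; apply/opXE.
apply: gen_open_preimage oV => _ [l ->].
by apply: gen_open_base; exists l; rewrite fS.
Qed.

Section SupportDatum.
Variables (Y : Type) (opY : set (set Y)) (SY : L -> set Y).
Hypothesis Y_T0 : is_T0 opY.
Hypothesis SY_join : forall l m, SY (l `|` m) = (fun y => SY l y \/ SY m y).
Hypothesis SY_inj : forall T1 T2, is_ind T1 -> is_ind T2 ->
  ind_ext SY T1 = ind_ext SY T2 -> T1 = T2.
Hypothesis opY_gen : forall V, opY V <-> gen_open (supp_compl SY) V.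

Lemma supp_le l m y : m <= l -> SY m y -> SY l y.
Proof. by move=> ml Smy; rewrite -(join_r ml) SY_join; left. Qed.

Lemma is_ind_unsupported l y : ~ SY l y -> is_ind (fun k => ~ SY k y).
Proof.
move=> Sly; split; first by exists l.
split=> [a b Say Sby | a b ba Say Sby]; first by rewrite SY_join; tauto.
by apply/Say/(supp_le ba).
Qed.

Lemma ind_ext_proper (T1 T2 : set L) : is_ind T1 -> is_ind T2 -> T1 `<` T2 ->
  exists y, ind_ext SY T2 y /\ ~ ind_ext SY T1 y.
Proof.
move=> I1 I2 [T12 T21]; apply/not_existsP => noy; apply: T21.
suff E : ind_ext SY T1 = ind_ext SY T2 by rewrite (SY_inj I1 I2 E).
apply/seteqP; split=> [y [k [T1k Sky]] | y T2y].
- by exists k; split=> //; exact: T12.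
- by apply: contrapT => T1y; exact: (noy y).
Qed.

Lemma supp_point_eq (x y : Y) : (forall l, SY l x <-> SY l y) -> x = y.
Proof.
move=> Sxy; apply: contrapT => /Y_T0 [U [/opY_gen oU]].
have : U x <-> U y.
  apply: gen_open_indistinguishable oU => _ [l ->].
  by have := Sxy l; tauto.
tauto.
Qed.

Lemma XL_point (P : @XL disp L) : exists y, forall l, SY l y <-> SuppXL l P.
Proof.
case: P => P XP; rewrite /SuppXL /=; have [Pind [_ [m [Qm Pm]]]] := XP.
have PQ : P `<` ind_above_inter P.
  by split; [exact: ind_above_inter_sup | move/(_ m Qm)].
have [y [[m' [Qm' Sm'y]] Py]] :=
  ind_ext_proper Pind (is_ind_above_inter Pind) PQ.
exists y => l; split=> [Sly Pl | Pl]; first by apply: Py; exists l.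
apply: contrapT => Sly.
have PU : P `<=` (fun k => ~ SY k y) by move=> k Pk Sky; apply: Py; exists k.
by apply: (Qm' _ (is_ind_unsupported Sly)) Sm'y; split=> //; exists l.
Qed.

Lemma support_map_unique {X : Type} (opX : set (set X)) (SX : L -> set X)
    (f g : X -> Y) :
  is_support_map opX SX opY SY f -> is_support_map opX SX opY SY g -> f = g.
Proof.
move=> [_ fS] [_ gS]; apply/funext => x; apply: supp_point_eq => l.
have fE : SX l x = SY l (f x) by rewrite fS.
have gE : SX l x = SY l (g x) by rewrite gS.
by rewrite -fE -gE.
Qed.

End SupportDatum.

End Semilattice.

Theorem mainTheorem2 (disp : Order.disp_t) (L : joinSemilatticeType disp) :
  is_support_datum (@opensXL disp L) (@SuppXL disp L) /\
  (forall (Y : Type) (opY : (Y -> Prop) -> Prop) (SY : L -> Y -> Prop),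
     is_support_datum opY SY ->
     exists! f : XL -> Y, is_support_map (@opensXL disp L) (@SuppXL disp L) opY SY f).
Proof.
split; first exact: XL_support_datum.
move=> Y opY SY [Y_T0 [SY_join [SY_inj opY_gen]]].
have [f fE] := choice (XL_point SY_join SY_inj).
have fmap : is_support_map (@opensXL disp L) (@SuppXL disp L) opY SY f.
  apply: is_support_map_of_supp => // l.
  by apply/funext => P; apply/propext; apply: iff_sym.
by exists f; split=> // g; exact: (support_map_unique Y_T0 opY_gen fmap).
Qed.
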